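(* For every integer $k\geq 0$, the formal power series $G_k(x)$ satisfies $$G_k(x)=\frac{1+x\sum_{j=0}^{k-1}C(k,j)\bigl(4^{j}+(-1)^{k}(-4)^{j}\bigr)G_j(x)}{1-2^{k}(2^{k+1}+1)x},$$ where $C(k,j)=\binom{k}{j}$ (for $k=0$ this reads $G_0(x)=1/(1-3x)$).
   Context: The Stern polynomials $B_n(t)\in\mathbb{Z}[t]$ are defined by $B_0(t)=0$, $B_1(t)=1$, and for $n\geq 1$: $B_{2n}(t)=tB_n(t)$, $B_{2n+1}(t)=B_n(t)+B_{n+1}(t)$. For $n\geq1$ let $e(n)=\deg B_n(t)$. For each $n\ge0$ the set $\{a\geq1:\;e(a)=n\}$ is finite (it has $3^n$ elements). For $k,n\geq 0$ let $S_k(n)=\sum_{a\geq 1:\;e(a)=n}a^{k}$ and define the formal power series $G_k(x)=\sum_{a=1}^{\infty}a^{k}x^{e(a)}=\sum_{n=0}^{\infty}S_k(n)x^n$. *)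

From HB Require Import structures.
From mathcomp Require Import all_boot all_order all_algebra.
From Stdlib Require Import ClassicalEpsilon.
Set Implicit Arguments. Unset Strict Implicit. Unset Printing Implicit Defensive.
Import Order.TTheory GRing.Theory Num.Theory.
Local Open Scope ring_scope.

(* Stern polynomials, computed with fuel (fuel n suffices for B_n). *)
Fixpoint Baux (f n : nat) : {poly int} :=
  match f with
  | 0 => 0
  | f'.+1 =>
    if n is 0 then 0 else
    if n == 1%N then 1 else
    if odd n then Baux f' n./2 + Baux f' (n./2).+1
    else 'X * Baux f' n./2
  end.

Definition B (n : nat) : {poly int} := Baux n n.

Definition e (n : nat) : nat := (size (B n)).-1.

(* S_k(n) = sum of a^k over the (finite) set {a >= 1 : e(a) = n}.
   The set is enumerated by a duplicate-free list chosen by classical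
   choice (the sum does not depend on the choice); if no such list
   existed the value would default to the sum over [::]. *)
Definition enumerates (n : nat) (s : seq nat) : Prop :=
  uniq s /\ forall a, (a \in s) <-> ((1 <= a)%N /\ e a = n).

Definition level_set (n : nat) : seq nat :=
  epsilon (inhabits [::]) (enumerates n).

Definition S (k n : nat) : nat := (\sum_(a <- level_set n) a ^ k)%N.

Definition fps := nat -> int.
Definition fps_one : fps := fun n => (n == 0%N)%:R.
Definition fps_X : fps := fun n => (n == 1%N)%:R.
Definition fps_add (f g : fps) : fps := fun n => f n + g n.
Definition fps_sub (f g : fps) : fps := fun n => f n - g n.
Definition fps_scale (c : int) (f : fps) : fps := fun n => c * f n.
Definition fps_mul (f g : fps) : fps :=
  fun n => \sum_(i < n.+1) f i * g (n - i)%N.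
Definition fps_sum (m : nat) (F : nat -> fps) : fps :=
  fun n => \sum_(j < m) F j n.

(* G_k(x) = sum_{a >= 1} a^k x^{e(a)} = sum_n S_k(n) x^n *)
Definition G (k : nat) : fps := fun n => (S k n)%:Z.

From HB Require Import structures.
From mathcomp Require Import all_boot all_order all_algebra.
From mathcomp Require Import zify ring.
From Stdlib Require Import ClassicalEpsilon FunctionalExtensionality.
Import Order.TTheory GRing.Theory Num.Theory.
Local Open Scope ring_scope.

(* Write sizeB a = size (B a) = e(a) + 1.  Since Stern polynomials have
   nonnegative coefficients, the Stern recurrences give
     sizeB (2b) = sizeB b + 1,   sizeB (2b+1) = max (sizeB b) (sizeB (b+1)),
   and by strong induction consecutive sizes differ by at most one.  Hence
   for b >= 1 the three numbers 2b, 4b-1 and 4b+1 all have degree e(b) + 1,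
   and every a >= 2 is of exactly one of these three forms.  The level set
   {a >= 1 : e(a) = n+1} is therefore the disjoint union of the images of
   {b >= 1 : e(b) = n} under b |-> 2b, 4b-1, 4b+1; we realise it as an
   explicit list [level n], starting from level 0 = [:: 1].  Summing the
   binomial identity (2b)^k + (4b-1)^k + (4b+1)^k
     = 2^k (2^(k+1)+1) b^k + sum_(j<k) C(k,j) (4^j + (-1)^k (-4)^j) b^j
   over level n yields S_k(0) = 1 and the linear recurrence for S_k(n+1),
   which is exactly the coefficientwise form of the stated identity. *)

Lemma Baux_fuel f g n : (n <= f)%N -> (n <= g)%N -> Baux f n = Baux g n.
Proof.
elim: f g n => [|f IH] [|g] n /=; try by case: n.
case: n => [|n] // Hf Hg.
case: ifP => // /eqP not1.
have Hh := odd_double_half n.+1; rewrite -muln2 in Hh.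
case: ifP => Ho; rewrite Ho in Hh.
  by rewrite (IH g) ?(IH g (n.+1./2).+1) //; lia.
by rewrite (IH g) //; lia.
Qed.

Lemma Baux_succ f n : Baux f.+1 n =
  if n is 0 then 0 else if n == 1%N then 1 else
  if odd n then Baux f n./2 + Baux f (n./2).+1 else 'X * Baux f n./2.
Proof. by []. Qed.

Lemma B1 : B 1 = 1.
Proof. by []. Qed.

Lemma B_even n : (1 <= n)%N -> B (2 * n) = 'X * B n.
Proof.
move=> Hn; rewrite /B.
case E: (2 * n)%N => [|m]; first lia.
rewrite Baux_succ.
have -> : (m.+1 == 1%N) = false by apply/eqP; lia.
have -> : odd m.+1 = false by rewrite -E oddM.
have -> : (m.+1)./2 = n by rewrite -E mul2n doubleK.
by rewrite (Baux_fuel m n) //; lia.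
Qed.

Lemma B_odd n : (1 <= n)%N -> B (2 * n).+1 = B n + B n.+1.
Proof.
move=> Hn; rewrite /B Baux_succ.
have -> : ((2 * n).+1 == 1%N) = false by apply/eqP; lia.
have -> : odd (2 * n).+1 = true by rewrite /= oddM.
have -> : ((2 * n).+1)./2 = n by rewrite /= mul2n uphalf_double.
by rewrite (Baux_fuel (2 * n) n n) ?(Baux_fuel (2 * n) n.+1 n.+1) //; lia.
Qed.

Lemma Baux_coef_ge0 f n i : 0 <= (Baux f n)`_i.
Proof.
elim: f n i => [|f IH] [|n] i /=; rewrite ?coef0 //.
case: ifP => _; first by rewrite coef1; case: (i == 0)%N.
case: ifP => _; first by rewrite coefD addr_ge0.
by rewrite coefXM; case: ifP.
Qed.

(* No cancellation can occur when adding polynomials with nonnegative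
   coefficients, so the size of the sum is the larger of the two sizes. *)
Lemma size_add_coef_ge0 (R : numDomainType) (p q : {poly R}) :
  (forall i, 0 <= p`_i) -> (forall i, 0 <= q`_i) ->
  size (p + q) = maxn (size p) (size q).
Proof.
move=> p_ge0 q_ge0.
have size_le (u v : {poly R}) : (forall i, 0 <= u`_i) ->
    (forall i, 0 <= v`_i) -> (size u <= size (u + v)%R)%N.
  move=> u_ge0 v_ge0; apply/leq_sizeP => j /leq_sizeP uv0.
  by have /eqP := uv0 j (leqnn j); rewrite coefD paddr_eq0 // => /andP[/eqP].
apply/eqP; rewrite eqn_leq size_polyD geq_max size_le //.
by rewrite addrC size_le.
Qed.

Definition sizeB (a : nat) : nat := size (B a).

Lemma sizeB1 : sizeB 1 = 1%N.
Proof. by rewrite /sizeB B1 size_poly1. Qed.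

Lemma sizeB_even n : (1 <= n)%N -> (1 <= sizeB n)%N ->
  sizeB (2 * n) = (sizeB n).+1.
Proof.
move=> Hn Hs; rewrite /sizeB B_even // mulrC size_mulX //.
by rewrite -size_poly_eq0 -/(sizeB n); lia.
Qed.

Lemma sizeB_odd n : (1 <= n)%N ->
  sizeB (2 * n).+1 = maxn (sizeB n) (sizeB n.+1).
Proof.
by move=> Hn; rewrite /sizeB B_odd // size_add_coef_ge0 // => i;
  apply: Baux_coef_ge0.
Qed.

Lemma sizeB_adjacent m : (1 <= m)%N ->
  [/\ (1 <= sizeB m)%N, (1 <= sizeB m.+1)%N,
      (sizeB m.+1 <= (sizeB m).+1)%N & (sizeB m <= (sizeB m.+1).+1)%N].
Proof.
elim/ltn_ind: m => m IH Hm.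
case: (ltngtP m 1) => [|Hm2|->]; first lia; last first.
  by rewrite (sizeB_even 1) ?sizeB1.
have Hh := odd_double_half m; rewrite -muln2 in Hh.
set b := m./2 in Hh.
have Hb : (1 <= b)%N by case: (odd m) Hh; lia.
have b_lt_m : (b < m)%N by case: (odd m) Hh; lia.
have [h1 h2 h3 h4] := IH b b_lt_m Hb.
case: (odd m) Hh => /= Hh.
- have -> : m = (2 * b).+1 by lia.
  have -> : (2 * b).+2 = (2 * b.+1)%N by lia.
  rewrite sizeB_odd // sizeB_even //; split; lia.
- have -> : m = (2 * b)%N by lia.
  rewrite sizeB_even // sizeB_odd //; split; lia.
Qed.

Lemma sizeB_gt0 m : (1 <= m)%N -> (1 <= sizeB m)%N.
Proof. by case/sizeB_adjacent. Qed.

Lemma sizeB_2b b : (1 <= b)%N -> sizeB (2 * b) = (sizeB b).+1.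
Proof. by move=> Hb; rewrite sizeB_even // sizeB_gt0. Qed.

Lemma sizeB_4b1 b : (1 <= b)%N -> sizeB (4 * b).+1 = (sizeB b).+1.
Proof.
move=> Hb; have [h1 h2 h3 h4] := sizeB_adjacent _ Hb.
have -> : (4 * b)%N = (2 * (2 * b))%N by lia.
rewrite sizeB_odd; last lia.
by rewrite sizeB_2b // sizeB_odd //; lia.
Qed.

Lemma sizeB_4bm1 b : (1 <= b)%N -> sizeB (4 * b).-1 = (sizeB b).+1.
Proof.
move=> Hb; have -> : (4 * b).-1 = (2 * (2 * b).-1).+1 by lia.
rewrite sizeB_odd; last lia.
have -> : (2 * b).-1.+1 = (2 * b)%N by lia.
rewrite sizeB_2b //.
case: (ltngtP b 1) => [|Hb2|->]; [lia | | by rewrite sizeB1].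
have pred_b_pos : (1 <= b.-1)%N by lia.
have [h1 h2 h3 h4] := sizeB_adjacent _ pred_b_pos.
have -> : (2 * b).-1 = (2 * b.-1).+1 by lia.
rewrite sizeB_odd; last lia.
have E : b.-1.+1 = b by lia.
by rewrite E in h1 h2 h3 h4 *; lia.
Qed.

Lemma child_cases a : (2 <= a)%N ->
  [\/ exists2 b, (1 <= b)%N & a = (2 * b)%N,
      exists2 b, (1 <= b)%N & a = (4 * b).+1
    | exists2 b, (1 <= b)%N & a = (4 * b).-1].
Proof.
move=> Ha; have : (a %% 4 < 4)%N by rewrite ltn_mod.
case: (a %% 4)%N (divn_eq a 4) => [|[|[|[|r]]]] // Ea _.
- by apply: Or31; exists (2 * (a %/ 4))%N; lia.
- by apply: Or32; exists (a %/ 4)%N; lia.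
- by apply: Or31; exists (2 * (a %/ 4)).+1; lia.
- by apply: Or33; exists (a %/ 4).+1; lia.
Qed.

Lemma sizeB_ge2 a : (2 <= a)%N -> (2 <= sizeB a)%N.
Proof.
by case/child_cases => -[b Hb ->];
  rewrite ?sizeB_2b ?sizeB_4b1 ?sizeB_4bm1 // ltnS sizeB_gt0.
Qed.

Fixpoint level n : seq nat :=
  if n is n'.+1 then
    [seq (2 * b)%N | b <- level n'] ++ [seq (4 * b).-1 | b <- level n']
      ++ [seq (4 * b).+1 | b <- level n']
  else [:: 1%N].

Lemma mem_level n a : (a \in level n) = (1 <= a)%N && (sizeB a == n.+1).
Proof.
elim: n a => [|n IH] a /=.
  rewrite inE; apply/eqP/andP => [->|[H1 /eqP H2]]; first by rewrite sizeB1.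
  by case: (ltngtP a 1) => // Ha; [lia | have := sizeB_ge2 _ Ha; lia].
rewrite !mem_cat; apply/idP/andP.
- case/or3P => /mapP [b]; rewrite IH => /andP [Hb /eqP Hs] ->.
  + by rewrite sizeB_2b // Hs; split; lia.
  + by rewrite sizeB_4bm1 // Hs; split; lia.
  + by rewrite sizeB_4b1 // Hs; split; lia.
- case=> Ha /eqP Hs.
  have Ha2 : (2 <= a)%N.
    rewrite ltn_neqAle Ha andbT; apply/eqP => a1.
    by move: Hs; rewrite -a1 sizeB1.
  have lev b : (1 <= b)%N -> sizeB b = n.+1 -> b \in level n.
    by move=> Hb Hsb; rewrite IH Hb Hsb eqxx.
  case/child_cases: Ha2 Hs => -[b Hb ->];
    rewrite ?sizeB_2b ?sizeB_4b1 ?sizeB_4bm1 // => -[Hsb].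
  + by apply/or3P/Or31/map_f/lev.
  + by apply/or3P/Or33/map_f/lev.
  + by apply/or3P/Or32/map_f/lev.
Qed.

(* The three children maps are injective with pairwise disjoint images
   (residues 0, 3, 1 mod 4 or even), so [level n] has no repetitions. *)
Lemma level_uniq n : uniq (level n).
Proof.
elim: n => [|n IH] //=.
have pos b : b \in level n -> (1 <= b)%N by rewrite mem_level => /andP [].
rewrite !cat_uniq; apply/and5P; split.
- by rewrite map_inj_uniq // => x y; lia.
- apply/hasPn => x; rewrite mem_cat => /orP [] /mapP [b Hb ->];
  apply/negP => /mapP [c Hc E]; have := pos _ Hb; have := pos _ Hc; lia.
- by rewrite map_inj_in_uniq // => x y /pos Hx /pos Hy; lia.
- apply/hasPn => x /mapP [b Hb ->].
  by apply/negP => /mapP [c Hc E]; have := pos _ Hb; have := pos _ Hc; lia.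
- by rewrite map_inj_uniq // => x y; lia.
Qed.

Lemma level_enumerates n : enumerates n (level n).
Proof.
split; first exact: level_uniq.
move=> a; rewrite mem_level /e -/(sizeB a); split.
  by case/andP => -> /eqP ->.
by case=> H1 H2; rewrite H1 /=; have := sizeB_gt0 _ H1; lia.
Qed.

Lemma level_set_perm n : perm_eq (level_set n) (level n).
Proof.
have [set_uniq mem_set] : enumerates n (level_set n).
  by apply: epsilon_spec; exists (level n); apply: level_enumerates.
have [lev_uniq mem_lev] := level_enumerates n.
apply: uniq_perm => //.
move=> a; apply/idP/idP => Ha.
  by apply/(mem_lev a)/(mem_set a).
by apply/(mem_set a)/(mem_lev a).
Qed.

Lemma S_level k n : (S k n)%:Z = \sum_(a <- level n) (a%:Z) ^+ k.
Proof.
rewrite /S (perm_big _ (level_set_perm n)) /= -natz natr_sum.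
by apply: eq_bigr => a _; rewrite natrX natz.
Qed.

Lemma children_powers (R : comPzRingType) (x : R) (k : nat) :
  (2 * x) ^+ k + (4 * x - 1) ^+ k + (4 * x + 1) ^+ k =
  2 ^+ k * (2 ^+ k.+1 + 1) * x ^+ k +
  \sum_(j < k) 'C(k, j)%:R * (4 ^+ j + (-1) ^+ k * (-4) ^+ j) * x ^+ j.
Proof.
have binom (y : R) :
    (y + 1) ^+ k = \sum_(j < k) 'C(k, j)%:R * y ^+ j + y ^+ k.
  rewrite exprD1n big_ord_recr /= binn mulr1n.
  by congr (_ + _); apply: eq_bigr => j _; rewrite mulr_natl.
have -> : (4 * x - 1) ^+ k = (-1) ^+ k * (-4 * x + 1) ^+ k.
  by rewrite -exprMn; congr (_ ^+ _); ring.
have low_terms : \sum_(j < k) 'C(k, j)%:R * (4 ^+ j + (-1) ^+ k * (-4) ^+ j)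
        * x ^+ j = (-1) ^+ k * \sum_(j < k) 'C(k, j)%:R * (-4 * x) ^+ j
                   + \sum_(j < k) 'C(k, j)%:R * (4 * x) ^+ j.
  rewrite mulr_sumr -big_split /=; apply: eq_bigr => j _.
  by rewrite !exprMn; ring.
have top_sign : (-1) ^+ k * (-4) ^+ k = 4 ^+ k :> R.
  by rewrite -exprMn; congr (_ ^+ _); ring.
have four_pow : 4 ^+ k = 2 ^+ k * 2 ^+ k :> R.
  by rewrite -exprMn; congr (_ ^+ _); ring.
rewrite (binom (4 * x)) (binom (-4 * x)) low_terms !exprMn exprS.
by rewrite mulrDr mulrA top_sign four_pow; ring.
Qed.

(* Only a = 1 has degree 0. *)
Lemma S_zero k : S k 0 = 1%N.
Proof.
by apply/eqP; rewrite -(eqr_nat int) !natz S_level /= big_seq1 expr1n.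
Qed.

(* Summing children_powers over the parents b in level n. *)
Lemma S_succ k n : (S k n.+1)%:Z =
  2 ^+ k * (2 ^+ k.+1 + 1) * (S k n)%:Z +
  \sum_(j < k) ('C(k, j))%:Z * (4 ^+ j + (-1) ^+ k * (-4) ^+ j) * (S j n)%:Z.
Proof.
rewrite !S_level /= !big_cat !big_map /=.
under [X in _ = _ + X]eq_bigr => j _ do rewrite S_level big_distrr /=.
rewrite exchange_big /= big_distrr -!big_split /=.
apply: eq_big_seq => b Hb.
have Hb1 : (1 <= b)%N by move: Hb; rewrite mem_level => /andP [].
have -> : ((4 * b).-1 : int) = 4 * b%:Z - 1.
  have pred_4b : ((4 * b).-1 + 1 = 4 * b)%N by lia.
  by apply: (addIr 1); rewrite subrK -[1 in LHS]/(Posz 1) -PoszD pred_4b PoszM.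
have -> : ((4 * b).+1 : int) = 4 * b%:Z + 1 by rewrite -addn1 PoszD PoszM.
rewrite PoszM addrA children_powers.
by congr (_ + _); apply: eq_bigr => j _; rewrite natz.
Qed.

(* Comparing coefficients, the constant term is S_k(0) = 1 and
   the coefficient of x^(m+1) is the recurrence S_succ. *)
Theorem mainTheorem8 (k : nat) :
  fps_mul (fps_sub fps_one
             (fps_scale ((2 ^+ k * (2 ^+ k.+1 + 1)) : int) fps_X))
          (G k)
  = fps_add fps_one
      (fps_mul fps_X
         (fps_sum k (fun j =>
            fps_scale (('C(k, j))%:Z * (4 ^+ j + (-1) ^+ k * (-4) ^+ j))
                      (G j)))).
Proof.
apply: functional_extensionality => m.
rewrite /fps_mul /fps_add /fps_sub /fps_one /fps_scale /fps_X /fps_sum /G.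
case: m => [|m].
  by rewrite !big_ord1 /= S_zero mulr0 subr0 mulr1 mul0r addr0.
rewrite !big_ord_recl /= !mulr0 !subr0 !mul0r !sub0r !add0r !mulr1 !mul1r.
have zero_sum (F : 'I_m -> int) : \sum_(i < m) 0 * F i = 0.
  by rewrite big1 // => i _; rewrite mul0r.
rewrite !zero_sum !addr0 subn0 [bump 0 0]/bump subSS subn0 S_succ.
by rewrite mulNr addrAC subrr add0r.
Qed.
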